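(* Let $a:[0,\infty)\times\mathcal T\to[0,\infty)$ be convex in its first argument with $\lim_{x\uparrow\infty}a(x,t_n)/x<R<\infty$ for each $n$. Suppose the reals $e^1_{j,n},e^2_{j,n},v_{j,n}$ ($0\le j\le J+1$, $1\le n\le N$), $d^1_{j,n},d^2_{j,n}$ ($0\le j\le J+1$, $1\le n\le N-1$) satisfy the feasibility conditions of $\mathbf L_H^{\mathcal X,\infty,\mathcal T}$. For each $n$ let $\bar e^1_n,\bar e^2_n,\bar v_n$ be the extended linear interpolations of $(e^1_{j,n})_{0\le j\le J+1}$, $(e^2_{j,n})_{0\le j\le J+1}$, $(v_{j,n})_{0\le j\le J+1}$, let $\tilde d^\delta_n$ be the mixed interpolation on $[0,x_J]$ and for $x>x_J$ set $\tilde d^1_n(x)=\min\{d^1_{J,n},e^1_{J+1,n}\}$ and $\tilde d^2_n(x)=\min\{d^2_{J,n},e^1_{J+1,n}-v_{J+1,n}\}$. Set also $\bar e^1_N\equiv0\equiv\bar e^2_1$. Then \[\bar v_n(x)\ge a(x,t_n)\quad (x\ge0,\ 1\le n\le N),\] \[\bar e^1_n(x)+\bar e^2_{n+1}(y)+(y-x)\tilde d^1_n(x)\ge0\quad(x,y\ge0,\ 1\le n<N),\] \[\bar e^1_n(x)+\bar e^2_{n+1}(y)+(y-x)\tilde d^2_n(x)-\bar v_n(x)+\bar v_{n+1}(y)\ge0\quad(x,y\ge0,\ 1\le n<N).\]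
   Context: Fix $N\ge1$, $J\ge1$, times $0=t_0<t_1<\dots<t_N=T$, $\mathcal T=\{t_1,\dots,t_N\}$, strikes $0=x_0<x_1<\dots<x_J$, and nonnegative numbers $\hat p_{j,n}$ ($0\le j\le J+1$, $1\le n\le N$). Write $\ell_n=\lim_{x\uparrow\infty}a(x,t_n)/x$. $\mathbf L_H^{\mathcal X,\infty,\mathcal T}$: over reals $e^1_{j,n},e^2_{j,n},v_{j,n}$ ($0\le j\le J+1$, $1\le n\le N$), $d^1_{j,n},d^2_{j,n}$ ($0\le j\le J+1$, $1\le n\le N-1$), with $e^1_{j,N}=e^2_{j,1}=0$ for all $j$, minimise $\sum_{n}\sum_{j=0}^{J+1}(e^1_{j,n}+e^2_{j,n})\hat p_{j,n}+\sum_{j=0}^{J+1}v_{j,N}\hat p_{j,N}$ subject to $v_{j,n}\ge0$ and, for $1\le n\le N$ in (i) and $1\le n\le N-1$ in (ii),(iii): (i) $v_{j,n}\ge a(x_j,t_n)$ for $0\le j\le J$, and $v_{J+1,n}\ge\ell_n$; (ii) $e^1_{j,n}+e^2_{k,n+1}+(x_k-x_j)d^1_{j,n}\ge0$ ($0\le j,k\le J$); $e^1_{J+1,n}-d^1_{J+1,n}\ge0$; $e^2_{J+1,n+1}+d^1_{j,n}\ge0$ ($0\le j\le J$); $e^1_{J+1,n}+e^2_{J+1,n+1}\ge0$; (iii) $e^1_{j,n}+e^2_{k,n+1}+(x_k-x_j)d^2_{j,n}-v_{j,n}+v_{k,n+1}\ge0$ ($0\le j,k\le J$); $e^1_{J+1,n}-d^2_{J+1,n}-v_{J+1,n}\ge0$;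 $e^2_{J+1,n+1}+d^2_{j,n}+v_{J+1,n+1}\ge0$ ($0\le j\le J$); $e^1_{J+1,n}+e^2_{J+1,n+1}-v_{J+1,n}+v_{J+1,n+1}\ge0$. Extended linear interpolation of $(h_0,\dots,h_{J+1})$: $\bar h(x_j)=h_j$; $\bar h(x)=\frac{x_{j+1}-x}{x_{j+1}-x_j}h_j+\frac{x-x_j}{x_{j+1}-x_j}h_{j+1}$ for $x_j<x<x_{j+1}$, $j<J$; $\bar h(x)=h_J+(x-x_J)h_{J+1}$ for $x>x_J$. Mixed interpolation on $[0,x_J]$ ($\delta\in\{1,2\}$, $1\le n\le N-1$): with $u^1_{j,n}=\frac{e^1_{j+1,n}-e^1_{j,n}}{x_{j+1}-x_j}$, $u^2_{j,n}=\frac{(e^1_{j+1,n}-v_{j+1,n})-(e^1_{j,n}-v_{j,n})}{x_{j+1}-x_j}$ ($0\le j<J$), set $\tilde d^\delta_n(x_j)=d^\delta_{j,n}$ and for $x\in(x_j,x_{j+1})$: $\tilde d^\delta_n(x)=d^\delta_{j,n}$ if $d^\delta_{j,n}\le u^\delta_{j,n}$; $=d^\delta_{j+1,n}$ if $d^\delta_{j,n}>u^\delta_{j,n}$ and $d^\delta_{j+1,n}\ge u^\delta_{j,n}$; $=u^\delta_{j,n}$ if $d^\delta_{j+1,n}<u^\delta_{j,n}<d^\delta_{j,n}$. *)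

From Stdlib Require Import Reals Lra Lia.
From Coquelicot Require Import Coquelicot.
Open Scope R_scope.

(* Generic piecewise function on the grid xs 0 < xs 1 < ... < xs J:
   value pt j at the grid point xs j (j <= J),
   value mid j y for xs j < y < xs (j+1) (j < J),
   value tail y for y > xs J.
   (Arguments y < 0 = xs 0 are irrelevant.)  Called with k = J. *)
Fixpoint piecewise (xs : nat -> R) (pt : nat -> R) (mid : nat -> R -> R)
  (tail : R -> R) (J k : nat) (y : R) : R :=
  match k with
  | O => if Req_EM_T y (xs J) then pt J else tail y
  | S k' =>
      let j := (J - k)%nat in
      if Req_EM_T y (xs j) then pt j
      else if Rlt_dec y (xs (S j)) then mid j y
      else piecewise xs pt mid tail J k' y
  end.

Definition ext_interp (xs : nat -> R) (J : nat) (h : nat -> R) (y : R) : R :=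
  piecewise xs h
    (fun j y => (xs (S j) - y) / (xs (S j) - xs j) * h j
              + (y - xs j) / (xs (S j) - xs j) * h (S j))
    (fun y => h J + (y - xs J) * h (S J)) J J y.

(* Mixed interpolation of the slopes d (j = 0..J) against the function g
   (g = e^1_{.,n} for delta = 1, g = e^1_{.,n} - v_{.,n} for delta = 2),
   with constant value c for y > xs J. *)
Definition mixed_interp (xs : nat -> R) (J : nat) (d g : nat -> R) (c : R)
  (y : R) : R :=
  piecewise xs d
    (fun j _ =>
       let u := (g (S j) - g j) / (xs (S j) - xs j) in
       if Rle_dec (d j) u then d j
       else if Rle_dec u (d (S j)) then d (S j)
       else u)
    (fun _ => c) J J y.

(* Feasibility for L_H^{X,infty,T}; variables indexed (j, n).
   a_n x stands for a(x, t_n); ell n for lim_{x -> oo} a(x,t_n)/x. *)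
Definition feasible (N J : nat) (xs : nat -> R) (a_n : nat -> R -> R)
  (ell : nat -> R) (e1 e2 v d1 d2 : nat -> nat -> R) : Prop :=
  (forall j, (j <= S J)%nat -> e1 j N = 0 /\ e2 j 1%nat = 0) /\
  (forall j n, (j <= S J)%nat -> (1 <= n <= N)%nat -> 0 <= v j n) /\
  (forall n, (1 <= n <= N)%nat ->
     (forall j, (j <= J)%nat -> v j n >= a_n n (xs j)) /\ v (S J) n >= ell n) /\
  (forall n, (1 <= n <= N - 1)%nat ->
     (forall j k, (j <= J)%nat -> (k <= J)%nat ->
        e1 j n + e2 k (S n) + (xs k - xs j) * d1 j n >= 0) /\
     e1 (S J) n - d1 (S J) n >= 0 /\
     (forall j, (j <= J)%nat -> e2 (S J) (S n) + d1 j n >= 0) /\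
     e1 (S J) n + e2 (S J) (S n) >= 0) /\
  (forall n, (1 <= n <= N - 1)%nat ->
     (forall j k, (j <= J)%nat -> (k <= J)%nat ->
        e1 j n + e2 k (S n) + (xs k - xs j) * d2 j n - v j n + v k (S n) >= 0) /\
     e1 (S J) n - d2 (S J) n - v (S J) n >= 0 /\
     (forall j, (j <= J)%nat -> e2 (S J) (S n) + d2 j n + v (S J) (S n) >= 0) /\
     e1 (S J) n + e2 (S J) (S n) - v (S J) n + v (S J) (S n) >= 0).

From Stdlib Require Import Reals Lra Lia.
From Coquelicot Require Import Coquelicot.
Open Scope R_scope.

(* Extended linear interpolation is a positive linear map of the node values
   which reproduces affine functions (with [h (S J)] as the slope), so an
   inequality affine in [y] holds on [0, oo) once it holds at the nodes and,
   for the slope, at infinity.  For fixed [x] the second and third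
   inequalities are affine in [y]; at the nodes they follow from the node
   constraints of the linear program because the mixed slope at [x] is
   chosen so that each node constraint at [x] exceeds one at a neighbouring
   grid point by a nonnegative product.  The first inequality is convexity:
   between nodes [a] lies below its chords, beyond the last node below its
   asymptotic line of slope [ell n]. *)

Definition mixed_slope (dl dr u : R) : R :=
  if Rle_dec dl u then dl else if Rle_dec u dr then dr else u.

Lemma mixed_slope_ge_min dl dr u : Rmin dl dr <= mixed_slope dl dr u.
Proof.
  unfold mixed_slope, Rmin.
  destruct (Rle_dec dl u), (Rle_dec u dr), (Rle_dec dl dr); lra.
Qed.

(* [u] is the chord slope from [(a, gl)] to [(b, gr)]; in each case of the
   mixed rule the conclusion is one of the two hypotheses plus a product of
   two nonnegative factors. *)
Lemma mixed_slope_support a b x z gl gr hk dl dr u :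
  a < x < b -> (z <= a \/ b <= z) -> gr = gl + (b - a) * u ->
  0 <= gl + hk + (z - a) * dl -> 0 <= gr + hk + (z - b) * dr ->
  0 <= gl + (x - a) * u + hk + (z - x) * mixed_slope dl dr u.
Proof.
  intros Hx Hz Hu Hl Hr; unfold mixed_slope.
  destruct (Rle_dec dl u) as [Hdl|Hdl]; [|destruct (Rle_dec u dr) as [Hdr|Hdr]].
  - assert (0 <= (x - a) * (u - dl)) by (apply Rmult_le_pos; lra); nra.
  - assert (0 <= (b - x) * (dr - u)) by (apply Rmult_le_pos; lra); nra.
  - destruct Hz as [Hz|Hz].
    + assert (0 <= (a - z) * (dl - u)) by (apply Rmult_le_pos; lra); nra.
    + assert (0 <= (z - b) * (u - dr)) by (apply Rmult_le_pos; lra); nra.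
Qed.

Lemma tail_slope_support xJ x z g g' hk d :
  xJ < x -> z <= xJ -> 0 <= g + hk + (z - xJ) * d ->
  0 <= g + (x - xJ) * g' + hk + (z - x) * Rmin d g'.
Proof.
  intros Hx Hz H.
  assert (Rmin d g' <= d) by apply Rmin_l.
  assert (Rmin d g' <= g') by apply Rmin_r.
  assert (0 <= (xJ - z) * (d - Rmin d g')) by (apply Rmult_le_pos; lra).
  assert (0 <= (x - xJ) * (g' - Rmin d g')) by (apply Rmult_le_pos; lra).
  nra.
Qed.

Section Grid.

Variables (xs : nat -> R) (J : nat).

Inductive piecewise_spec (k : nat) (x : R) : Prop :=
  | PiecewiseNode j : (j <= J)%nat -> x = xs j ->
      (forall pt mid tail, piecewise xs pt mid tail J k x = pt j) ->
      piecewise_spec k x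
  | PiecewiseMid j : (j < J)%nat -> xs j < x < xs (S j) ->
      (forall pt mid tail, piecewise xs pt mid tail J k x = mid j x) ->
      piecewise_spec k x
  | PiecewiseTail : xs J < x ->
      (forall pt mid tail, piecewise xs pt mid tail J k x = tail x) ->
      piecewise_spec k x.

Lemma piecewise_skip pt mid tail k x :
  x <> xs (J - S k)%nat -> xs (S (J - S k)) <= x ->
  piecewise xs pt mid tail J (S k) x = piecewise xs pt mid tail J k x.
Proof.
  intros Hne Hle. simpl.
  destruct (Req_EM_T x (xs (J - S k)%nat)); [contradiction|].
  destruct (Rlt_dec x (xs (S (J - S k)))); [lra|reflexivity].
Qed.

Lemma piecewise_cases_from k x :
  (k <= J)%nat -> xs (J - k)%nat <= x -> piecewise_spec k x.
Proof.
  revert x; induction k as [|k IH]; intros x Hk Hx.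
  - rewrite Nat.sub_0_r in Hx.
    destruct (Req_EM_T x (xs J)) as [e|ne].
    + apply (PiecewiseNode 0 x J); [lia|exact e|].
      intros; simpl; destruct (Req_EM_T x (xs J)); [reflexivity|contradiction].
    + apply PiecewiseTail; [lra|].
      intros; simpl; destruct (Req_EM_T x (xs J)); [contradiction|reflexivity].
  - destruct (Req_EM_T x (xs (J - S k)%nat)) as [e|ne].
    + apply (PiecewiseNode (S k) x (J - S k)); [lia|exact e|].
      intros; simpl; destruct (Req_EM_T x (xs (J - S k)%nat));
        [reflexivity|contradiction].
    + destruct (Rlt_dec x (xs (S (J - S k)))) as [l|nl].
      * apply (PiecewiseMid (S k) x (J - S k)); [lia|lra|].
        intros; simpl; destruct (Req_EM_T x (xs (J - S k)%nat)); [contradiction|].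
        destruct (Rlt_dec x (xs (S (J - S k)))); [reflexivity|contradiction].
      * assert (Hskip := fun pt mid tail =>
                  piecewise_skip pt mid tail k x ne (Rnot_lt_le _ _ nl)).
        assert (E : S (J - S k) = (J - k)%nat) by lia.
        destruct (IH x ltac:(lia) ltac:(rewrite <- E; lra))
          as [j hj hx h|j hj hx h|hx h].
        -- apply (PiecewiseNode (S k) x j); auto.
           intros; rewrite Hskip; apply h.
        -- apply (PiecewiseMid (S k) x j); auto.
           intros; rewrite Hskip; apply h.
        -- apply PiecewiseTail; auto.
           intros; rewrite Hskip; apply h.
Qed.

Lemma piecewise_cases x : xs 0%nat <= x -> piecewise_spec J x.
Proof. intros H; apply piecewise_cases_from; [lia|now rewrite Nat.sub_diag]. Qed.

Lemma ext_interp_add f g x : xs 0%nat <= x ->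
  ext_interp xs J (fun j => f j + g j) x = ext_interp xs J f x + ext_interp xs J g x.
Proof.
  intros Hx; unfold ext_interp.
  destruct (piecewise_cases x Hx) as [j _ _ h|j _ _ h|_ h]; rewrite !h; ring.
Qed.

Lemma ext_interp_sub f g x : xs 0%nat <= x ->
  ext_interp xs J (fun j => f j - g j) x = ext_interp xs J f x - ext_interp xs J g x.
Proof.
  intros Hx; unfold ext_interp.
  destruct (piecewise_cases x Hx) as [j _ _ h|j _ _ h|_ h]; rewrite !h; ring.
Qed.

Lemma ext_interp_nonneg h x :
  (forall j, (j <= S J)%nat -> 0 <= h j) -> xs 0%nat <= x ->
  0 <= ext_interp xs J h x.
Proof.
  intros Hh Hx; unfold ext_interp.
  destruct (piecewise_cases x Hx) as [j hj _ e|j hj hx e|hx e]; rewrite e.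
  - apply Hh; lia.
  - assert (0 < xs (S j) - xs j) by lra.
    apply Rplus_le_le_0_compat; apply Rmult_le_pos;
      try apply Rdiv_le_0_compat; try apply Hh; lra || lia.
  - apply Rplus_le_le_0_compat; [apply Hh; lia|].
    apply Rmult_le_pos; [lra|apply Hh; lia].
Qed.

(* Node values of the affine function [x |-> c + s * x]; the slope [s]
   sits at index [S J], where [ext_interp] reads its tail slope. *)
Definition affine_nodes (c s : R) (j : nat) : R :=
  if Nat.leb j J then c + s * xs j else s.

Lemma ext_interp_affine_nodes c s x : xs 0%nat <= x ->
  ext_interp xs J (affine_nodes c s) x = c + s * x.
Proof.
  intros Hx; unfold ext_interp, affine_nodes.
  assert (HJ : Nat.leb (S J) J = false) by (apply Nat.leb_gt; lia).
  destruct (piecewise_cases x Hx) as [j hj hx e|j hj hx e|hx e]; rewrite e.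
  - apply Nat.leb_le in hj; rewrite hj, hx; reflexivity.
  - assert (Hj : Nat.leb j J = true) by (apply Nat.leb_le; lia).
    assert (HSj : Nat.leb (S j) J = true) by (apply Nat.leb_le; lia).
    rewrite Hj, HSj; field; lra.
  - rewrite HJ, Nat.leb_refl; ring.
Qed.

Lemma ext_interp_affine_lower_bound h c s y :
  (forall k, (k <= J)%nat -> 0 <= c + h k + s * xs k) ->
  0 <= h (S J) + s -> xs 0%nat <= y ->
  0 <= c + ext_interp xs J h y + s * y.
Proof.
  intros Hnode Htail Hy.
  replace (c + ext_interp xs J h y + s * y)
    with (ext_interp xs J (fun k => h k + affine_nodes c s k) y)
    by (rewrite ext_interp_add, ext_interp_affine_nodes by exact Hy; ring).
  apply ext_interp_nonneg; [|exact Hy].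
  intros k Hk; unfold affine_nodes.
  destruct (Nat.leb k J) eqn:E.
  - apply Nat.leb_le in E; specialize (Hnode k E); lra.
  - apply Nat.leb_gt in E; replace k with (S J) by lia; exact Htail.
Qed.

Hypothesis xs_incr : forall j, (j < J)%nat -> xs j < xs (S j).

Lemma xs_le i j : (i <= j)%nat -> (j <= J)%nat -> xs i <= xs j.
Proof.
  intros Hij; induction Hij as [|m Hm IH]; intros HJ; [lra|].
  specialize (IH ltac:(lia)); specialize (xs_incr m ltac:(lia)); lra.
Qed.

Section MixedInterpolation.

Variables (G H d : nat -> R).

Hypothesis node_constraint : forall j k, (j <= J)%nat -> (k <= J)%nat ->
  G j + H k + (xs k - xs j) * d j >= 0.
Hypothesis tail_slope_constraint : forall j, (j <= J)%nat -> H (S J) + d j >= 0.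
Hypothesis tail_constraint : G (S J) + H (S J) >= 0.

Lemma mixed_interp_node_support x k : xs 0%nat <= x -> (k <= J)%nat ->
  0 <= ext_interp xs J G x + H k
       + (xs k - x) * mixed_interp xs J d G (Rmin (d J) (G (S J))) x.
Proof.
  intros Hx Hk; unfold ext_interp, mixed_interp.
  destruct (piecewise_cases x Hx) as [j hj hx e|j hj hx e|hx e]; rewrite !e.
  - subst x; apply Rge_le, node_constraint; assumption.
  - set (u := (G (S j) - G j) / (xs (S j) - xs j)).
    change (0 <= (xs (S j) - x) / (xs (S j) - xs j) * G j
                 + (x - xs j) / (xs (S j) - xs j) * G (S j)
                 + H k + (xs k - x) * mixed_slope (d j) (d (S j)) u).
    replace ((xs (S j) - x) / (xs (S j) - xs j) * G j
             + (x - xs j) / (xs (S j) - xs j) * G (S j))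
      with (G j + (x - xs j) * u) by (unfold u; field; lra).
    apply (mixed_slope_support _ (xs (S j)) _ _ _ (G (S j)));
      try (apply Rge_le, node_constraint; lia); [lra| |unfold u; field; lra].
    destruct (Compare_dec.le_lt_dec k j).
    + left; apply xs_le; lia.
    + right; apply xs_le; lia.
  - apply tail_slope_support; [exact hx|apply xs_le; lia|].
    apply Rge_le, node_constraint; lia.
Qed.

Lemma mixed_interp_tail_support x : xs 0%nat <= x ->
  0 <= H (S J) + mixed_interp xs J d G (Rmin (d J) (G (S J))) x.
Proof.
  intros Hx; unfold mixed_interp.
  destruct (piecewise_cases x Hx) as [j hj _ e|j hj _ e|_ e]; rewrite !e.
  - apply Rge_le, tail_slope_constraint, hj.
  - cbv beta zeta; fold (mixed_slope (d j) (d (S j))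
                          ((G (S j) - G j) / (xs (S j) - xs j))).
    eapply Rle_trans; [|apply Rplus_le_compat_l, mixed_slope_ge_min].
    assert (H1 := tail_slope_constraint j ltac:(lia)).
    assert (H2 := tail_slope_constraint (S j) ltac:(lia)).
    unfold Rmin; destruct (Rle_dec (d j) (d (S j))); lra.
  - assert (H1 := tail_slope_constraint J (le_n J)).
    unfold Rmin; destruct (Rle_dec (d J) (G (S J))); lra.
Qed.

Lemma interpolated_constraint x y : xs 0%nat <= x -> xs 0%nat <= y ->
  ext_interp xs J G x + ext_interp xs J H y
    + (y - x) * mixed_interp xs J d G (Rmin (d J) (G (S J))) x >= 0.
Proof.
  intros Hx Hy.
  set (D := mixed_interp xs J d G (Rmin (d J) (G (S J))) x).
  assert (Hbound := ext_interp_affine_lower_bound H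
                      (ext_interp xs J G x - x * D) D y).
  apply Rle_ge.
  replace (ext_interp xs J G x + ext_interp xs J H y + (y - x) * D)
    with (ext_interp xs J G x - x * D + ext_interp xs J H y + D * y) by ring.
  apply Hbound; [|apply mixed_interp_tail_support|]; try assumption.
  intros k Hk.
  assert (Hsup := mixed_interp_node_support x k Hx Hk); fold D in Hsup; lra.
Qed.

End MixedInterpolation.

End Grid.

Section ConvexAsymptote.

Variable f : R -> R.

Hypothesis f_convex : forall x y lam, 0 <= x -> 0 <= y -> 0 <= lam <= 1 ->
  f (lam * x + (1 - lam) * y) <= lam * f x + (1 - lam) * f y.

Lemma convex_chord c x y : 0 <= c -> c < x < y ->
  f x <= f c + (x - c) / (y - c) * (f y - f c).
Proof.
  intros Hc Hx.
  set (lam := (y - x) / (y - c)).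
  assert (Hlam : 0 <= lam <= 1).
  { unfold lam; split; [apply Rdiv_le_0_compat; lra|].
    apply Rmult_le_reg_r with (y - c); [lra|].
    field_simplify; lra. }
  assert (Hconv := f_convex c y lam Hc ltac:(lra) Hlam).
  replace (lam * c + (1 - lam) * y) with x in Hconv by (unfold lam; field; lra).
  replace ((x - c) / (y - c)) with (1 - lam) by (unfold lam; field; lra).
  lra.
Qed.

Variable l : R.

Hypothesis f_slope_lim : is_lim (fun x => f x / x) p_infty l.

(* If the chord slope [s] from [c] to [x] exceeded [l], convexity would force
   [f y / y >= s + (f c - c * s) / y] for all [y > x], whose limit is [s]. *)
Lemma convex_le_asymptote c x : 0 <= c -> c < x -> f x <= f c + (x - c) * l.
Proof.
  intros Hc Hx.
  apply Rnot_lt_le; intros Habove.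
  set (s := (f x - f c) / (x - c)).
  assert (Hs : l < s).
  { unfold s; apply Rmult_lt_reg_r with (x - c); [lra|].
    field_simplify; lra. }
  assert (Hlow : Rbar_locally' p_infty
                   (fun y => s + (f c - c * s) * / y <= f y / y)).
  { exists x; intros y Hy.
    assert (Hchord := convex_chord c x y Hc ltac:(lra)).
    assert (Hgrow : f c + (y - c) * s <= f y).
    { assert (Hw : 0 <= (y - c) / (x - c)) by (apply Rdiv_le_0_compat; lra).
      apply (Rmult_le_compat_l _ _ _ Hw) in Hchord.
      replace ((y - c) * s) with ((y - c) / (x - c) * (f x - f c))
        by (unfold s; field; lra).
      replace ((y - c) / (x - c) * (f c + (x - c) / (y - c) * (f y - f c)))
        with ((y - c) / (x - c) * f c + (f y - f c)) in Hchord by (field; lra).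
      lra. }
    replace (s + (f c - c * s) * / y) with ((f c + (y - c) * s) / y)
      by (field; lra).
    apply Rmult_le_compat_r; [apply Rlt_le, Rinv_0_lt_compat; lra|exact Hgrow]. }
  assert (Hlim : is_lim (fun y => s + (f c - c * s) * / y) p_infty
                   (s + (f c - c * s) * 0)).
  { apply is_lim_plus'; [apply is_lim_const|].
    apply (is_lim_mult (fun _ => f c - c * s) (fun y => / y) p_infty
             (f c - c * s) 0); [apply is_lim_const| |exact I].
    replace (Finite 0) with (Rbar_inv p_infty) by reflexivity.
    apply is_lim_inv; [apply is_lim_id|discriminate]. }
  assert (Hle := is_lim_le_loc _ _ _ _ _ Hlow Hlim f_slope_lim).
  simpl in Hle; lra.
Qed.

Variables (xs : nat -> R) (J : nat).

Hypothesis xs0 : xs 0%nat = 0.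
Hypothesis xs_incr : forall j, (j < J)%nat -> xs j < xs (S j).

Lemma ext_interp_above_convex h x :
  (forall j, (j <= J)%nat -> f (xs j) <= h j) -> l <= h (S J) -> 0 <= x ->
  f x <= ext_interp xs J h x.
Proof.
  intros Hnode Htail Hx; unfold ext_interp.
  assert (Hnonneg : forall j, (j <= J)%nat -> 0 <= xs j)
    by (intros j Hj; rewrite <- xs0; apply (xs_le xs J xs_incr); lia).
  destruct (piecewise_cases xs J x ltac:(lra)) as [j hj hx e|j hj hx e|hx e];
    rewrite e.
  - subst x; apply Hnode, hj.
  - cbv beta.
    assert (Ha := Hnode j ltac:(lia)); assert (Hb := Hnode (S j) hj).
    set (a := xs j) in *; set (b := xs (S j)) in *.
    assert (Hchord := convex_chord a x b (Hnonneg j ltac:(lia)) hx).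
    set (w := (x - a) / (b - a)) in *.
    assert (Hw : 0 <= w <= 1).
    { unfold w; split; [apply Rdiv_le_0_compat; lra|].
      apply Rmult_le_reg_r with (b - a); [lra|]; field_simplify; lra. }
    replace ((b - x) / (b - a)) with (1 - w) by (unfold w; field; lra).
    assert (0 <= (1 - w) * (h j - f a)) by (apply Rmult_le_pos; lra).
    assert (0 <= w * (h (S j) - f b)) by (apply Rmult_le_pos; lra).
    nra.
  - assert (HJ := Hnonneg J (le_n J)).
    assert (Hasym := convex_le_asymptote (xs J) x HJ hx).
    assert ((x - xs J) * l <= (x - xs J) * h (S J))
      by (apply Rmult_le_compat_l; lra).
    assert (Hend := Hnode J (le_n J)); lra.
Qed.

End ConvexAsymptote.

Theorem mainTheorem11
  (N J : nat) (t xs : nat -> R) (a : R -> R -> R) (ell : nat -> R) (Rb : R)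
  (e1 e2 v d1 d2 : nat -> nat -> R) :
  (1 <= N)%nat -> (1 <= J)%nat ->
  t 0%nat = 0 -> (forall n, (n < N)%nat -> t n < t (S n)) ->
  xs 0%nat = 0 -> (forall j, (j < J)%nat -> xs j < xs (S j)) ->
  (* a : [0,oo) x T -> [0,oo) *)
  (forall n x, (1 <= n <= N)%nat -> 0 <= x -> 0 <= a x (t n)) ->
  (* convex in the first argument on [0,oo) *)
  (forall n x y lam, (1 <= n <= N)%nat -> 0 <= x -> 0 <= y -> 0 <= lam <= 1 ->
     a (lam * x + (1 - lam) * y) (t n)
       <= lam * a x (t n) + (1 - lam) * a y (t n)) ->
  (* ell n = lim_{x -> oo} a(x,t_n)/x, and ell n < Rb *)
  (forall n, (1 <= n <= N)%nat ->
     is_lim (fun x => a x (t n) / x) p_infty (ell n) /\ ell n < Rb) ->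
  feasible N J xs (fun n x => a x (t n)) ell e1 e2 v d1 d2 ->
  let ebar1 n y := if Nat.eq_dec n N then 0 else ext_interp xs J (fun j => e1 j n) y in
  let ebar2 n y := if Nat.eq_dec n 1 then 0 else ext_interp xs J (fun j => e2 j n) y in
  let vbar n y := ext_interp xs J (fun j => v j n) y in
  let dt1 n y := mixed_interp xs J (fun j => d1 j n) (fun j => e1 j n)
                   (Rmin (d1 J n) (e1 (S J) n)) y in
  let dt2 n y := mixed_interp xs J (fun j => d2 j n) (fun j => e1 j n - v j n)
                   (Rmin (d2 J n) (e1 (S J) n - v (S J) n)) y in
  (forall n x, (1 <= n <= N)%nat -> 0 <= x -> vbar n x >= a x (t n)) /\
  (forall n x y, (1 <= n < N)%nat -> 0 <= x -> 0 <= y ->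
     ebar1 n x + ebar2 (S n) y + (y - x) * dt1 n x >= 0) /\
  (forall n x y, (1 <= n < N)%nat -> 0 <= x -> 0 <= y ->
     ebar1 n x + ebar2 (S n) y + (y - x) * dt2 n x - vbar n x + vbar (S n) y >= 0).
Proof.
  intros HN HJ Ht0 Ht Hx0 Hinc Ha0 Hconv Hlim Hfeas ebar1 ebar2 vbar dt1 dt2.
  destruct Hfeas as [_ [_ [Hi [Hii Hiii]]]].
  split; [|split].
  - intros n x Hn Hx.
    destruct (Hi n Hn) as [Hnode Htail].
    apply Rle_ge, (ext_interp_above_convex (fun x => a x (t n))
                     (fun x y lam => Hconv n x y lam Hn) (ell n)
                     (proj1 (Hlim n Hn)) xs J Hx0 Hinc); [|apply Rge_le, Htail|exact Hx].
    intros j Hj; apply Rge_le, Hnode, Hj.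
  - intros n x y Hn Hx Hy; subst ebar1 ebar2 dt1; cbv beta.
    destruct (Nat.eq_dec n N) as [e|_]; [lia|].
    destruct (Nat.eq_dec (S n) 1) as [e|_]; [lia|].
    destruct (Hii n ltac:(lia)) as [Hnode [_ [Hslope HtailJ]]].
    apply interpolated_constraint; auto; lra.
  - intros n x y Hn Hx Hy; subst ebar1 ebar2 dt2 vbar; cbv beta.
    destruct (Nat.eq_dec n N) as [e|_]; [lia|].
    destruct (Nat.eq_dec (S n) 1) as [e|_]; [lia|].
    destruct (Hiii n ltac:(lia)) as [Hnode [_ [Hslope HtailJ]]].
    assert (Hint := interpolated_constraint xs J Hinc
                      (fun j => e1 j n - v j n) (fun j => e2 j (S n) + v j (S n))
                      (fun j => d2 j n)
                      ltac:(intros j k Hj Hk; specialize (Hnode j k Hj Hk); lra)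
                      ltac:(intros j Hj; specialize (Hslope j Hj); lra)
                      ltac:(lra) x y ltac:(lra) ltac:(lra)).
    cbv beta in Hint.
    rewrite ext_interp_sub, ext_interp_add in Hint by lra.
    lra.
Qed.
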